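(* Consider an agent-dependent SDP PEP for distributed optimization with $n$ agents, all of which are equivalent, and assume it admits a worst-case (optimal) solution. Then there is a worst-case instance such that (i) the worst-case sequences of iterates are unitary transformations of each other: there exist $R_i\in\mathbb{R}^{d\times d}$ with $R_i^TR_i=I$ such that $x_i^k=R_ix_1^k$ for all agents $i$ and all iterations $k$; and (ii) the worst-case local functions have equal values at their own iterates, $f_i(x_i^k)=f_j(x_j^k)$ for all $i,j$ and all $k$, and can be chosen identical up to a unitary change of variables: $f_i(x)=f_1(R_i^Tx)$ for all $i$, where $f_1$ is a function interpolating agent 1's worst-case iterates, gradients and function values.
   Context: Distributed optimization: $n$ agents with local functions $f_i:\mathbb{R}^d\to\mathbb{R}$ minimize $\frac1n\sum_if_i(x)$ via an algorithm using local gradient evaluations, consensus steps with averaging matrices, and linear combinations of local variables. In the agent-dependent SDP PEP, each agent $i$ holds $p$ vector variables (iterates $x_i^k$, gradients $g_i^k=\nabla f_i(x_i^k)$, other local variables) as columns of $P_i\in\mathbb{R}^{d\times p}$ in a common order and $q$ function values $f_i^k=f_i(x_i^k)$ in $f_i\in\mathbb{R}^q$; the variables are $F=[f_1^T\dots f_n^T]$ and $G=P^TP\succeq0$ with $G_{ij}=P_i^TP_j$; objective and constraints (including interpolation constraints ensuring each agent's triplets $(x_i^k,g_i^k,f_i^k)$ are interpolated by a function of the given class) are linear or LMI in $(F,G)$. A worst-case instance is obtained from an optimal $(F,G)$ by factoring $G=P^TP$ and interpolating each agent's triplets. Agents $i,j$ are equivalent if swapping their blocks in any feasible solution yields a feasible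 solution with the same objective value. *)

From HB Require Import structures.
From mathcomp Require Import all_boot all_order all_algebra.
From mathcomp Require Import all_classical all_reals all_analysis.
Set Implicit Arguments. Unset Strict Implicit. Unset Printing Implicit Defensive.
Import Order.TTheory GRing.Theory Num.Theory.
Import numFieldNormedType.Exports.
Local Open Scope ring_scope.

(*  n agents, each with p vector variables and q function values.          *)
(*  F : 'M_(n,q), row i = f_i^T (the q function values of agent i).       *)
(*  G : 'M_(n*p), the Gram matrix P^T P; the column of the global index    *)
(*      pidx i a (agent i, local variable a) is the a-th column of P_i,    *)
(*      so the (i,j) block of G is P_i^T P_j.                               *)

Definition pidx (n p : nat) (i : 'I_n) (a : 'I_p) : 'I_(n * p) := mxvec_index i a.

Definition pidx_inv (n p : nat) (u : 'I_(n * p)) : 'I_n * 'I_p :=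
  enum_val (cast_ord (esym (mxvec_cast n p)) u).

Definition blk_swap (n p : nat) (i j : 'I_n) (u : 'I_(n * p)) : 'I_(n * p) :=
  let k := (pidx_inv u).1 in
  pidx (if k == i then j else if k == j then i else k) (pidx_inv u).2.

Definition swapG (R : Type) (n p : nat) (i j : 'I_n) (G : 'M[R]_(n * p)) :
  'M[R]_(n * p) := \matrix_(u, v) G (blk_swap i j u) (blk_swap i j v).

Definition swapF (R : Type) (n q : nat) (i j : 'I_n) (F : 'M[R]_(n, q)) :
  'M[R]_(n, q) := xrow i j F.

Definition psd (R : numDomainType) (m : nat) (G : 'M[R]_m) : Prop :=
  G^T = G /\ forall z : 'rV[R]_m, 0 <= (z *m G *m z^T) 0 0.

Definition linFG (R : pzRingType) (n q m : nat)
  (A : 'M[R]_(n, q)) (B : 'M[R]_m) (F : 'M[R]_(n, q)) (G : 'M[R]_m) : R :=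
  \sum_(i < n) \sum_(k < q) A i k * F i k + \sum_(u < m) \sum_(v < m) B u v * G u v.

(* Linear equalities are two inequalities, and an LMI  M(F,G) ⪰ 0  with M
   affine is the family of affine inequalities  -z^T M(F,G) z <= 0  (z
   ranging over all vectors).  Hence every "linear or LMI" constraint set,
   in particular the interpolation constraints, is of this form. *)
Definition pep_feasible (R : numDomainType) (n p q : nat) (I : Type)
  (cA : I -> 'M[R]_(n, q)) (cB : I -> 'M[R]_(n * p)) (cb : I -> R)
  (F : 'M[R]_(n, q)) (G : 'M[R]_(n * p)) : Prop :=
  psd G /\ forall c : I, linFG (cA c) (cB c) F G <= cb c.

Definition pep_optimal (R : numDomainType) (n p q : nat) (I : Type)
  (cA : I -> 'M[R]_(n, q)) (cB : I -> 'M[R]_(n * p)) (cb : I -> R)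
  (oA : 'M[R]_(n, q)) (oB : 'M[R]_(n * p))
  (F : 'M[R]_(n, q)) (G : 'M[R]_(n * p)) : Prop :=
  pep_feasible cA cB cb F G /\
  forall F' G', pep_feasible cA cB cb F' G' -> linFG oA oB F' G' <= linFG oA oB F G.

Definition agents_equivalent (R : numDomainType) (n p q : nat) (I : Type)
  (cA : I -> 'M[R]_(n, q)) (cB : I -> 'M[R]_(n * p)) (cb : I -> R)
  (oA : 'M[R]_(n, q)) (oB : 'M[R]_(n * p)) (i j : 'I_n) : Prop :=
  forall F G, pep_feasible cA cB cb F G ->
    pep_feasible cA cB cb (swapF i j F) (swapG i j G) /\
    linFG oA oB (swapF i j F) (swapG i j G) = linFG oA oB F G.

Definition is_gradient (R : realType) (d : nat) (f : 'cV[R]_d -> R^o)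
  (x g : 'cV[R]_d) : Prop :=
  differentiable f x /\ forall h : 'cV[R]_d, 'd f x h = (g^T *m h) 0 0.

Definition locvar (R : Type) (d n p : nat) (P : 'M[R]_(d, n * p))
  (i : 'I_n) (a : 'I_p) : 'cV[R]_d := col (pidx i a) P.

(* f interpolates the triplets (x_i^k, g_i^k, f_i^k), k < q, of agent i:
   x_i^k = local variable xc k of agent i, g_i^k = local variable gc k,
   f_i^k = F i k; i.e. f(x_i^k) = f_i^k and ∇f(x_i^k) = g_i^k *)
Definition interpolates (R : realType) (d n p q : nat)
  (xc gc : 'I_q -> 'I_p) (F : 'M[R]_(n, q)) (P : 'M[R]_(d, n * p))
  (i : 'I_n) (f : 'cV[R]_d -> R^o) : Prop :=
  forall k : 'I_q,
    f (locvar P i (xc k)) = F i k /\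
    is_gradient f (locvar P i (xc k)) (locvar P i (gc k)).

Definition orthogonal_mx (R : pzRingType) (d : nat) (Q : 'M[R]_d) : Prop :=
  Q^T *m Q = 1%:M.

From HB Require Import structures.
From mathcomp Require Import all_boot all_order all_algebra.
From mathcomp Require Import all_classical all_reals all_analysis.
From mathcomp Require Import fingroup perm ring lra.
Import Order.TTheory GRing.Theory Num.Theory.
Import numFieldNormedType.Exports.
Set Implicit Arguments. Unset Strict Implicit. Unset Printing Implicit Defensive.
Local Open Scope ring_scope.

(* Averaging a worst-case solution over all permutations of the agents keeps it
   worst-case: the feasible set is convex and every permutation, being a product
   of transpositions, is a symmetry of the PEP.  The averaged Gram matrix G has
   equal diagonal blocks A and equal off-diagonal blocks B, with A - B and
   A + (n - 1) B positive semidefinite.  Writing them as C^T C and D^T D, the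
   matrix P = I_n ⊗ C + (1/n) J_n ⊗ (D - C) satisfies P^T P = G and is itself
   invariant under block permutations, so the columns of P of agent i are
   obtained from those of agent 1 by the coordinate permutation exchanging the
   two blocks.  Extended by the identity from R^(np) to R^d, these permutations
   become orthogonal maps R_i, and f_i := f_1 (R_i^T .) interpolates the data of
   agent i because an orthogonal change of variables transports values and
   gradients. *)

Section BlockIndex.
Variables n p : nat.

Lemma pidxK (i : 'I_n) (a : 'I_p) : pidx_inv (pidx i a) = (i, a).
Proof. by rewrite /pidx_inv /pidx /mxvec_index cast_ordK enum_rankK. Qed.

Lemma pidx_invK (u : 'I_(n * p)) : pidx (pidx_inv u).1 (pidx_inv u).2 = u.
Proof.
by rewrite /pidx_inv /pidx /mxvec_index -surjective_pairing enum_valK cast_ordKV.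
Qed.

Lemma pidx_inj i a j b : pidx i a = pidx j b :> 'I_(n * p) -> i = j /\ a = b.
Proof. by move=> /(congr1 (@pidx_inv n p)); rewrite !pidxK => -[-> ->]. Qed.

Lemma big_pidx (V : nmodType) (f : 'I_(n * p) -> V) :
  \sum_u f u = \sum_i \sum_a f (pidx i a).
Proof.
rewrite pair_bigA (reindex (fun ia : 'I_n * 'I_p => pidx ia.1 ia.2)) /=.
  by apply: eq_bigr => -[i a].
by exists (@pidx_inv n p) => [[i a] _|u _]; rewrite ?pidxK ?pidx_invK.
Qed.

Definition blk_perm (s : {perm 'I_n}) (u : 'I_(n * p)) : 'I_(n * p) :=
  pidx (s (pidx_inv u).1) (pidx_inv u).2.

Lemma blk_perm_pidx s i a : blk_perm s (pidx i a) = pidx (s i) a.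
Proof. by rewrite /blk_perm pidxK. Qed.

Lemma blk_permM s t u : blk_perm (s * t) u = blk_perm t (blk_perm s u).
Proof. by rewrite /blk_perm pidxK permM. Qed.

Lemma blk_perm1 u : blk_perm 1 u = u.
Proof. by rewrite /blk_perm perm1 pidx_invK. Qed.

Lemma blk_swapE i j u : blk_swap i j u = blk_perm (tperm i j) u.
Proof.
rewrite /blk_swap /blk_perm; congr pidx.
by case: tpermP => [->|->|/eqP/negPf-> /eqP/negPf->]; rewrite ?eqxx //; case: eqP.
Qed.

Lemma blk_perm_inj s : injective (blk_perm s).
Proof.
move=> u v; rewrite -[u]pidx_invK -[v]pidx_invK !blk_perm_pidx.
by move/pidx_inj=> [/perm_inj -> ->].
Qed.

Definition blk_permP s : {perm 'I_(n * p)} := perm (@blk_perm_inj s).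

End BlockIndex.
Arguments blk_perm {n p} s u.
Arguments blk_permP {n p} s.

Section AgentPermutation.
Variables (R : Type) (n p q : nat).

Definition permF (s : {perm 'I_n}) (F : 'M[R]_(n, q)) : 'M[R]_(n, q) :=
  \matrix_(i, k) F (s i) k.

Definition permG (s : {perm 'I_n}) (G : 'M[R]_(n * p)) : 'M[R]_(n * p) :=
  \matrix_(u, v) G (blk_perm s u) (blk_perm s v).

Lemma permF1 F : permF 1 F = F.
Proof. by apply/matrixP => i k; rewrite mxE perm1. Qed.

Lemma permG1 G : permG 1 G = G.
Proof. by apply/matrixP => u v; rewrite mxE !blk_perm1. Qed.

Lemma permFM s t F : permF (s * t) F = permF s (permF t F).
Proof. by apply/matrixP => i k; rewrite !mxE permM. Qed.

Lemma permGM s t G : permG (s * t) G = permG s (permG t G).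
Proof. by apply/matrixP => u v; rewrite !mxE !blk_permM. Qed.

Lemma permF_tperm i j F : permF (tperm i j) F = swapF i j F.
Proof. by apply/matrixP => a k; rewrite !mxE. Qed.

Lemma permG_tperm i j G : permG (tperm i j) G = swapG i j G.
Proof. by apply/matrixP => u v; rewrite !mxE !blk_swapE. Qed.

End AgentPermutation.

Section PsdClosure.
Variable R : numDomainType.

Lemma psd_scale m c (M : 'M[R]_m) : 0 <= c -> psd M -> psd (c *: M).
Proof.
move=> c0 [MT Mq]; split; first by rewrite linearZ /= MT.
by move=> z; rewrite -scalemxAr -scalemxAl mxE mulr_ge0.
Qed.

Lemma psd_sum m (J : finType) (M : J -> 'M[R]_m) :
  (forall s, psd (M s)) -> psd (\sum_s M s).
Proof.
move=> hM; split.
  by rewrite raddf_sum; apply: eq_bigr => s _; case: (hM s).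
move=> z; rewrite mulmx_sumr mulmx_suml summxE.
by apply: sumr_ge0 => s _; case: (hM s).
Qed.

Lemma psd_congr m k (M : 'M[R]_m) (S : 'M[R]_(m, k)) :
  psd M -> psd (S^T *m M *m S).
Proof.
move=> [MT Mq]; split; first by rewrite !trmx_mul trmxK MT mulmxA.
by move=> z; have := Mq (z *m S^T); rewrite trmx_mul trmxK !mulmxA.
Qed.

End PsdClosure.

Section LinearFunctional.
Variables (R : comPzRingType) (n q m : nat) (A : 'M[R]_(n, q)) (B : 'M[R]_m).

Lemma linFG_sum (J : finType) (F : J -> 'M[R]_(n, q)) (G : J -> 'M[R]_m) :
  linFG A B (\sum_s F s) (\sum_s G s) = \sum_s linFG A B (F s) (G s).
Proof.
rewrite /linFG big_split /=; congr (_ + _);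
  under eq_bigr => i _ do under eq_bigr => k _ do rewrite summxE mulr_sumr;
  by rewrite [RHS]exchange_big; apply: eq_bigr => i _; rewrite [RHS]exchange_big.
Qed.

Lemma linFG_scale c (F : 'M[R]_(n, q)) (G : 'M[R]_m) :
  linFG A B (c *: F) (c *: G) = c * linFG A B F G.
Proof.
rewrite /linFG mulrDr !mulr_sumr; congr (_ + _); apply: eq_bigr => i _;
  rewrite mulr_sumr; apply: eq_bigr => k _; by rewrite mxE mulrCA.
Qed.

End LinearFunctional.

Section Convexity.
Variables (R : numFieldType) (n p q : nat).
Variables (I : Type) (cA : I -> 'M[R]_(n, q)) (cB : I -> 'M[R]_(n * p)) (cb : I -> R).

Lemma pep_feasible_avg (J : finType) (F : J -> 'M[R]_(n, q)) (G : J -> 'M[R]_(n * p)) :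
  (0 < #|J|)%N -> (forall s, pep_feasible cA cB cb (F s) (G s)) ->
  pep_feasible cA cB cb (#|J|%:R^-1 *: \sum_s F s) (#|J|%:R^-1 *: \sum_s G s).
Proof.
move=> J0 hFG; have w0 : 0 <= #|J|%:R^-1 :> R by rewrite invr_ge0.
split; first by apply: psd_scale w0 _; apply: psd_sum => s; case: (hFG s).
move=> c; rewrite linFG_scale linFG_sum.
have -> : cb c = #|J|%:R^-1 * \sum_(s : J) cb c.
  by rewrite sumr_const -[cb c *+ _]mulr_natl mulKf // pnatr_eq0 -lt0n.
by apply: (ler_wpM2l w0); apply: ler_sum => s _; case: (hFG s) => _ ->.
Qed.

End Convexity.

Section Averaging.
Variables (R : numFieldType) (n p q : nat).

Definition avgF (F : 'M[R]_(n, q)) : 'M[R]_(n, q) :=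
  #|{perm 'I_n}|%:R^-1 *: \sum_s permF s F.

Definition avgG (G : 'M[R]_(n * p)) : 'M[R]_(n * p) :=
  #|{perm 'I_n}|%:R^-1 *: \sum_s permG s G.

Lemma permF_avg t F : permF t (avgF F) = avgF F.
Proof.
apply/matrixP => i k; rewrite !mxE !summxE; congr (_ * _).
rewrite [RHS](reindex_inj (mulgI t)) /=.
by apply: eq_bigr => s _; rewrite !mxE permM.
Qed.

Lemma permG_avg t G : permG t (avgG G) = avgG G.
Proof.
apply/matrixP => u v; rewrite !mxE !summxE; congr (_ * _).
rewrite [RHS](reindex_inj (mulgI t)) /=.
by apply: eq_bigr => s _; rewrite !mxE !blk_permM.
Qed.

End Averaging.

Section Symmetrization.
Variables (R : numFieldType) (n p q : nat) (I : Type).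
Variables (cA : I -> 'M[R]_(n, q)) (cB : I -> 'M[R]_(n * p)) (cb : I -> R).
Variables (oA : 'M[R]_(n, q)) (oB : 'M[R]_(n * p)).

Definition pep_symmetry (s : {perm 'I_n}) : Prop :=
  forall F G, pep_feasible cA cB cb F G ->
    pep_feasible cA cB cb (permF s F) (permG s G) /\
    linFG oA oB (permF s F) (permG s G) = linFG oA oB F G.

Lemma pep_symmetry1 : pep_symmetry 1.
Proof. by move=> F G; rewrite permF1 permG1. Qed.

Lemma pep_symmetryM s t : pep_symmetry s -> pep_symmetry t -> pep_symmetry (s * t).
Proof.
move=> hs ht F G /ht[/hs[fst est] et].
by rewrite permFM permGM; split; rewrite // est et.
Qed.

Lemma pep_symmetry_tperm i j :
  agents_equivalent cA cB cb oA oB i j -> pep_symmetry (tperm i j).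
Proof. by move=> hij F G; rewrite permF_tperm permG_tperm; apply: hij. Qed.

Hypothesis hequiv : forall i j : 'I_n, agents_equivalent cA cB cb oA oB i j.

Lemma pep_symmetry_all s : pep_symmetry s.
Proof.
have [ts -> _] := prod_tpermP s; elim: ts => [|t ts IH].
  by rewrite big_nil; apply: pep_symmetry1.
by rewrite big_cons; apply: pep_symmetryM => //; apply: pep_symmetry_tperm.
Qed.

Lemma pep_optimal_avg F G : pep_optimal cA cB cb oA oB F G ->
  pep_optimal cA cB cb oA oB (avgF F) (avgG G).
Proof.
have perm0 : (0 < #|{perm 'I_n}|)%N by apply/card_gt0P; exists 1%g.
move=> [fFG optFG]; split.
  by apply: pep_feasible_avg perm0 _ => s; case: (pep_symmetry_all s fFG).
move=> F' G' /optFG; congr (_ <= _).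
rewrite linFG_scale linFG_sum (eq_bigr (fun=> linFG oA oB F G)); last first.
  by move=> s _; case: (pep_symmetry_all s fFG).
by rewrite sumr_const -[linFG _ _ _ _ *+ _]mulr_natl mulKf // pnatr_eq0 -lt0n.
Qed.

Lemma exists_symmetric_optimum : (exists F G, pep_optimal cA cB cb oA oB F G) ->
  exists F G, [/\ pep_optimal cA cB cb oA oB F G,
    forall s, permF s F = F & forall s, permG s G = G].
Proof.
move=> [F [G optFG]]; exists (avgF F), (avgG G).
split=> [|s|s]; [exact: pep_optimal_avg | exact: permF_avg | exact: permG_avg].
Qed.

End Symmetrization.

Lemma ulsubmx1 (R : pzSemiRingType) m n (M : 'M[R]_(1 + m, 1 + n)) :
  ulsubmx M = (M 0 0)%:M.
Proof. by rewrite [LHS]mx11_scalar !mxE; congr ((M _ _)%:M); apply/val_inj. Qed.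

Lemma dlsubmx_sym (R : Type) m (M : 'M[R]_(1 + m)) :
  M^T = M -> dlsubmx M = (ursubmx M)^T.
Proof. by move=> MT; rewrite trmx_ursub MT. Qed.

Lemma quad_row_mx (R : comPzRingType) m (M : 'M[R]_(1 + m)) t (z : 'rV[R]_m) :
  M^T = M ->
  (row_mx t%:M z *m M *m (row_mx t%:M z)^T) 0 0 =
  t * (t * M 0 0) + 2 * t * (ursubmx M *m z^T) 0 0 + (z *m drsubmx M *m z^T) 0 0.
Proof.
move=> MT; set u := ursubmx M; set D := drsubmx M.
rewrite -[M in LHS]submxK mul_row_block tr_row_mx mul_row_col tr_scalar_mx.
rewrite dlsubmx_sym // ulsubmx1 !mul_scalar_mx mul_mx_scalar -/u -/D.
rewrite -[z *m u^T]trmxK trmx_mul !trmxK mulmxDl -scalemxAl.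
set c := u *m z^T; set e := z *m D *m z^T.
by rewrite !mxE eqxx mulr1n; ring.
Qed.

Section Pivot.
Variables (R : realFieldType) (m : nat) (M : 'M[R]_(1 + m)).
Hypothesis psdM : psd M.

Lemma psd_quad_row_mx_ge0 (t : R) (z : 'rV[R]_m) :
  0 <= t * (t * M 0 0) + 2 * t * (ursubmx M *m z^T) 0 0 + (z *m drsubmx M *m z^T) 0 0.
Proof. by case: psdM => MT Mq; rewrite -quad_row_mx. Qed.

Lemma psd_pivot_ge0 : 0 <= M 0 0.
Proof.
have := psd_quad_row_mx_ge0 1 0.
by rewrite trmx0 !mulmx0 !mxE !mul1r mulr0 !addr0.
Qed.

Lemma psd_drsubmx : psd (drsubmx M).
Proof.
case: psdM => MT _; split; first by rewrite trmx_drsub MT.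
by move=> z; have := psd_quad_row_mx_ge0 0 z; rewrite !(mul0r, mulr0, add0r).
Qed.

Lemma psd_ursubmx_eq0 : M 0 0 = 0 -> ursubmx M = 0.
Proof.
move=> a0; apply/matrixP => i j; rewrite ord1 [RHS]mxE.
set z : 'rV[R]_m := delta_mx 0 j; set e := (z *m drsubmx M *m z^T) 0 0.
have uz : (ursubmx M *m z^T) 0 0 = ursubmx M 0 j by rewrite trmx_delta -colE mxE.
have e0 : 0 <= e by have := psd_quad_row_mx_ge0 0 z; rewrite !(mul0r, mulr0, add0r).
apply/eqP; apply: contraT => u0.
(* a zero pivot makes the quadratic form affine in [t], hence unbounded below *)
have := psd_quad_row_mx_ge0 (- (e + 1) / (2 * ursubmx M 0 j)) z.
rewrite a0 !mulr0 add0r -/e uz.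
have -> : 2 * (- (e + 1) / (2 * ursubmx M 0 j)) * ursubmx M 0 j = - (e + 1) by field.
lra.
Qed.

Lemma psd_schur :
  psd (drsubmx M - (M 0 0)^-1 *: ((ursubmx M)^T *m ursubmx M)).
Proof.
have [a0|a0] := eqVneq (M 0 0) 0.
  by rewrite psd_ursubmx_eq0 // mulmx0 scaler0 subr0; apply: psd_drsubmx.
case: psdM => MT _; split.
  by rewrite linearB linearZ /= trmx_mul trmxK trmx_drsub MT.
move=> z; set c := (ursubmx M *m z^T) 0 0.
have uu : (z *m ((ursubmx M)^T *m ursubmx M) *m z^T) 0 0 = c ^+ 2.
  rewrite !mulmxA -(mulmxA _ _ z^T) -[z *m _]trmxK trmx_mul trmxK mxE big_ord1.
  by rewrite [_^T 0 0]mxE mulrC -expr2.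
have -> : (z *m (drsubmx M - (M 0 0)^-1 *: ((ursubmx M)^T *m ursubmx M)) *m z^T) 0 0
    = (z *m drsubmx M *m z^T) 0 0 - c ^+ 2 / M 0 0.
  rewrite mulmxBr mulmxBl -scalemxAr -scalemxAl.
  by rewrite [in LHS]mxE [X in _ + X]mxE [X in - X]mxE uu mulrC.
(* complete the square: take [t = - c / M 0 0] *)
rewrite (_ : _ - _ = - c / M 0 0 * (- c / M 0 0 * M 0 0) + 2 * (- c / M 0 0) * c
                     + (z *m drsubmx M *m z^T) 0 0); first exact: psd_quad_row_mx_ge0.
by field.
Qed.

End Pivot.

Lemma psd_factor (R : rcfType) m (M : 'M[R]_m) :
  psd M -> exists X : 'M[R]_m, X^T *m X = M.
Proof.
elim: m M => [|m IH]; first by exists 0; apply/matrixP => -[].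
rewrite -[m.+1]/(1 + m) => M psdM.
have [Y YS] := IH _ (psd_schur psdM).
set a := M 0 0 in YS *; set u := ursubmx M in YS *; set s := Num.sqrt a.
have ss : s * s = a by rewrite -expr2 sqr_sqrtr // psd_pivot_ge0.
(* if [a = 0] then [u = 0], so the junk value [0^-1 = 0] does no harm *)
have su : (s * s^-1) *: u = u.
  have [a0|a0] := eqVneq a 0; first by rewrite /u psd_ursubmx_eq0 // scaler0.
  by rewrite mulfV ?scale1r //; apply: contra_neq a0 => s0; rewrite -ss s0 mul0r.
exists (block_mx s%:M (s^-1 *: u) 0 Y).
rewrite tr_block_mx mulmx_block -[RHS]submxK.
rewrite ulsubmx1 dlsubmx_sym; last by case: psdM.
rewrite -/a -/u -[drsubmx M](subrK (a^-1 *: (u^T *m u))) -YS.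
rewrite !trmx0 !mulmx0 !mul0mx !addr0 tr_scalar_mx !mul_scalar_mx mul_mx_scalar.
rewrite scale_scalar_mx ss !scalerA su linearZ /= -scalemxAl -scalemxAr.
rewrite !scalerA -invfM ss; congr block_mx; last exact: addrC.
by rewrite -{2}su linearZ.
Qed.

Lemma sum_deltaE (R : pzSemiRingType) m (i : 'I_m) (f : 'I_m -> R) :
  \sum_k (k == i)%:R * f k = f i.
Proof.
by rewrite (bigD1 i) //= eqxx mul1r big1 ?addr0 // => k /negPf ->; rewrite mul0r.
Qed.

Lemma sum_if_eq (R : comPzRingType) m (c : 'I_m -> R) (x y : R) :
  \sum_j \sum_i c i * c j * (if i == j then x else y) =
  (\sum_i c i) ^+ 2 * y + (\sum_i c i ^+ 2) * (x - y).
Proof.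
have ifE i j : (if i == j then x else y) = y + (i == j)%:R * (x - y).
  by case: eqP => _; rewrite ?mul1r ?mul0r ?addr0 // addrC subrK.
under eq_bigr => j _ do under eq_bigr => i _ do rewrite ifE mulrDr.
under eq_bigr => j _ do rewrite big_split /=.
rewrite big_split /= expr2 !mulr_suml; congr (_ + _); apply: eq_bigr => j _.
  by rewrite mulr_sumr mulr_suml; apply: eq_bigr => i _; ring.
rewrite (eq_bigr (fun i => (i == j)%:R * (c i * c j * (x - y)))) ?sum_deltaE //.
by move=> i _; ring.
Qed.

Lemma sum_delta_affine (R : comPzRingType) m (i j : 'I_m) (x y x' y' : R) :
  \sum_k ((k == i)%:R * x + y) * ((k == j)%:R * x' + y') =
  (i == j)%:R * (x * x') + x * y' + y * x' + m%:R * (y * y').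
Proof.
rewrite (eq_bigr (fun k => (k == i)%:R * ((k == j)%:R * (x * x')) + (k == i)%:R * (x * y')
   + (k == j)%:R * (y * x') + y * y')); last by move=> k _; ring.
by rewrite !big_split /= !sum_deltaE sumr_const card_ord -[_ *+ m]mulr_natl.
Qed.

Lemma exists_perm_pair m (i j i' j' : 'I_m) : i != j -> i' != j' ->
  exists t : {perm 'I_m}, t i = i' /\ t j = j'.
Proof.
move=> ij ij'; set k := tperm i i' j.
exists (tperm i i' * tperm k j')%g; rewrite !permM tpermL; split; last exact: tpermL.
apply: tpermD => //; last by rewrite eq_sym.
by rewrite /k -{2}(tpermL i i') (inj_eq perm_inj) eq_sym.
Qed.

Section InvariantGram.
Variables (R : numFieldType) (n p : nat) (G : 'M[R]_(n * p)).
Hypothesis Ginv : forall s, permG s G = G.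

Lemma permG_invariantE s u v : G (blk_perm s u) (blk_perm s v) = G u v.
Proof. by rewrite -{2}(Ginv s) mxE. Qed.

Variables (i0 j0 : 'I_n).
Hypothesis i0j0 : i0 != j0.

Definition diag_blk : 'M[R]_p := \matrix_(a, b) G (pidx i0 a) (pidx i0 b).
Definition offdiag_blk : 'M[R]_p := \matrix_(a, b) G (pidx i0 a) (pidx j0 b).

Lemma permG_invariant_blockE i j a b :
  G (pidx i a) (pidx j b) = if i == j then diag_blk a b else offdiag_blk a b.
Proof.
rewrite !mxE; case: eqVneq => [<-|ij].
  by rewrite -(permG_invariantE (tperm i0 i)) !blk_perm_pidx tpermR.
have [t [ti tj]] := exists_perm_pair ij i0j0.
by rewrite -(permG_invariantE t) !blk_perm_pidx ti tj.
Qed.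

Definition blk_comb (c : 'I_n -> R) : 'M[R]_(n * p, p) :=
  \matrix_(u, a) (c (pidx_inv u).1 * ((pidx_inv u).2 == a)%:R).

Lemma blk_comb_pidx c i a' a : blk_comb c (pidx i a') a = c i * (a' == a)%:R.
Proof. by rewrite mxE pidxK. Qed.

Lemma blk_comb_gram c : (blk_comb c)^T *m G *m blk_comb c =
  (\sum_i c i) ^+ 2 *: offdiag_blk + (\sum_i c i ^+ 2) *: (diag_blk - offdiag_blk).
Proof.
apply/matrixP => a b.
have -> : ((\sum_i c i) ^+ 2 *: offdiag_blk +
            (\sum_i c i ^+ 2) *: (diag_blk - offdiag_blk)) a b =
    (\sum_i c i) ^+ 2 * offdiag_blk a b +
    (\sum_i c i ^+ 2) * (diag_blk a b - offdiag_blk a b) by rewrite !mxE.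
rewrite -sum_if_eq mxE big_pidx; apply: eq_bigr => j _.
rewrite (eq_bigr (fun a' => (a' == b)%:R * (c j * ((blk_comb c)^T *m G) a (pidx j a'))));
  last by move=> a' _; rewrite blk_comb_pidx; ring.
rewrite sum_deltaE mxE big_pidx mulr_sumr; apply: eq_bigr => i _.
rewrite (eq_bigr (fun a' => (a' == a)%:R * (c i * G (pidx i a') (pidx j b))));
  last by move=> a' _; rewrite mxE blk_comb_pidx; ring.
by rewrite sum_deltaE permG_invariant_blockE mulrCA mulrA.
Qed.

Hypothesis psdG : psd G.

Lemma psd_diag_sub_offdiag : psd (diag_blk - offdiag_blk).
Proof.
pose c i : R := (i == i0)%:R - (i == j0)%:R.
have sum_eq (i : 'I_n) : \sum_k (k == i)%:R = 1 :> R.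
  by rewrite -[RHS](sum_deltaE i (fun=> 1)); apply: eq_bigr => k _; rewrite mulr1.
have c_sum : \sum_i c i = 0 by rewrite sumrB !sum_eq subrr.
have c_sqr : \sum_i c i ^+ 2 = 2.
  rewrite (eq_bigr (fun i => (i == i0)%:R + (i == j0)%:R)) ?big_split /= ?sum_eq //.
  move=> i _; rewrite /c; case: (eqVneq i i0) => [->|_].
    by rewrite (negPf i0j0) /=; ring.
  by case: eqP => _ /=; ring.
have := psd_scale (_ : 0 <= 2^-1) (psd_congr (blk_comb c) psdG).
rewrite blk_comb_gram c_sum c_sqr expr0n /= scale0r add0r scalerA mulVf ?scale1r //.
by apply; rewrite invr_ge0.
Qed.

Lemma psd_diag_add_offdiag : psd (diag_blk + (n%:R - 1) *: offdiag_blk).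
Proof.
have n0 : n%:R != 0 :> R by rewrite pnatr_eq0 -lt0n; apply: leq_ltn_trans (ltn_ord i0).
have := psd_scale (_ : 0 <= n%:R^-1) (psd_congr (blk_comb (fun=> 1)) psdG).
rewrite blk_comb_gram (eq_bigr (fun=> 1) (fun i _ => expr1n _ 2)) sumr_const card_ord.
have -> : n%:R^-1 *: ((1 *+ n) ^+ 2 *: offdiag_blk + (1 *+ n) *: (diag_blk - offdiag_blk))
    = diag_blk + (n%:R - 1) *: offdiag_blk.
  by apply/matrixP => a b; rewrite !mxE; field.
by apply; rewrite invr_ge0.
Qed.

End InvariantGram.

Section CirculantFactor.
Variables (R : numFieldType) (n p : nat) (C D : 'M[R]_p).

Definition circ_factor : 'M[R]_(n * p) := \matrix_(r, u)
  (((pidx_inv r).1 == (pidx_inv u).1)%:R * C (pidx_inv r).2 (pidx_inv u).2 +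
   n%:R^-1 * (D - C) (pidx_inv r).2 (pidx_inv u).2).

Lemma circ_factor_pidx k c i a :
  circ_factor (pidx k c) (pidx i a) = (k == i)%:R * C c a + n%:R^-1 * (D - C) c a.
Proof. by rewrite mxE !pidxK. Qed.

Lemma permG_circ_factor s : permG s circ_factor = circ_factor.
Proof.
apply/matrixP => r u; rewrite -[r]pidx_invK -[u]pidx_invK mxE !blk_perm_pidx.
by rewrite !circ_factor_pidx (inj_eq perm_inj).
Qed.

Lemma circ_factor_gram (A B : 'M[R]_p) i j a b : (0 < n)%N ->
  C^T *m C = A - B -> D^T *m D = A + (n%:R - 1) *: B ->
  (circ_factor^T *m circ_factor) (pidx i a) (pidx j b) =
  if i == j then A a b else B a b.
Proof.
move=> n_gt0 CtC DtD; have n0 : n%:R != 0 :> R by rewrite pnatr_eq0 -lt0n.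
have gram_entry (X : 'M[R]_p) : \sum_c X c a * X c b = (X^T *m X) a b.
  by rewrite mxE; apply: eq_bigr => c _; rewrite mxE.
rewrite mxE big_pidx exchange_big /=.
under eq_bigr => c _ do under eq_bigr => k _ do rewrite mxE !circ_factor_pidx.
under eq_bigr => c _ do rewrite sum_delta_affine.
rewrite (eq_bigr (fun c => (i == j)%:R * (C c a * C c b) +
    n%:R^-1 * (D c a * D c b - C c a * C c b))); last by move=> c _; rewrite !mxE; field.
rewrite big_split /= -!mulr_sumr sumrB !gram_entry CtC DtD !mxE.
by case: eqP => _ /=; field.
Qed.

End CirculantFactor.

Lemma perm_le1 m (s : {perm 'I_m}) : (m <= 1)%N -> s = 1%g.
Proof.
move=> m_le1; have ord_eq0 (i : 'I_m) : val i = 0%N.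
  by apply/eqP; rewrite -leqn0 -ltnS (leq_trans (ltn_ord i) m_le1).
by apply/permP => i; rewrite perm1; apply/val_inj; rewrite !ord_eq0.
Qed.

Lemma psd_invariant_factor (R : rcfType) n p (G : 'M[R]_(n * p)) :
  psd G -> (forall s, permG s G = G) ->
  exists P : 'M[R]_(n * p), P^T *m P = G /\ forall s, permG s P = P.
Proof.
move=> psdG Ginv; have [n_le1|n_gt1] := leqP n 1.
  have [P PG] := psd_factor psdG; exists P; split=> // s.
  by rewrite (perm_le1 s n_le1) permG1.
have n_gt0 : (0 < n)%N by apply: ltnW.
pose i0 : 'I_n := Ordinal n_gt0; pose j0 : 'I_n := Ordinal n_gt1.
have i0j0 : i0 != j0 by [].
have [C CtC] := psd_factor (psd_diag_sub_offdiag Ginv i0j0 psdG).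
have [D DtD] := psd_factor (psd_diag_add_offdiag Ginv i0j0 psdG).
exists (circ_factor n C D); split; last exact: permG_circ_factor.
apply/matrixP => u v; rewrite -[u]pidx_invK -[v]pidx_invK.
by rewrite (circ_factor_gram _ _ _ _ n_gt0 CtC DtD) (permG_invariant_blockE Ginv i0j0).
Qed.

Lemma col_pidx_tperm (R : pzRingType) n p (P : 'M[R]_(n * p)) i j a :
  permG (tperm i j) P = P ->
  col (pidx j a) P = perm_mx (blk_permP (tperm i j)) *m col (pidx i a) P.
Proof.
move=> Pinv; rewrite -row_permE; apply/matrixP => r k.
by rewrite -{1}Pinv !mxE blk_perm_pidx tpermR permE.
Qed.

Lemma blk_permP1 n p : blk_permP 1%g = 1%g :> {perm 'I_(n * p)}.
Proof. by apply/permP => u; rewrite permE perm1 blk_perm1. Qed.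

Lemma orthogonal_perm_mx (R : comPzRingType) m (s : 'S_m) :
  orthogonal_mx (perm_mx s : 'M[R]_m).
Proof. by rewrite /orthogonal_mx tr_perm_mx -perm_mxM mulVg perm_mx1. Qed.

Lemma orthogonal_mx_tr (R : comUnitRingType) m (Q : 'M[R]_m) :
  orthogonal_mx Q -> orthogonal_mx Q^T.
Proof. by rewrite /orthogonal_mx trmxK; apply: mulmx1C. Qed.

Section OrthogonalExtension.
Variables (R : comPzRingType) (m d : nat).
Hypothesis m_le_d : (m <= d)%N.

Lemma mul_pid_mxK k (X : 'M[R]_(m, k)) :
  (pid_mx m : 'M[R]_(m, d)) *m (pid_mx m *m X) = X.
Proof. by rewrite mulmxA pid_mx_id // pid_mx_1 mul1mx. Qed.

Definition ext_mx (Q : 'M[R]_m) : 'M[R]_d := pid_mx m *m Q *m pid_mx m + copid_mx m.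

Lemma ext_mx_pid Q k (X : 'M[R]_(m, k)) :
  ext_mx Q *m (pid_mx m *m X) = pid_mx m *m (Q *m X).
Proof.
rewrite mulmxDl [copid_mx m *m _]mulmxA mul_copid_mx_pid // mul0mx addr0.
by rewrite -!mulmxA mul_pid_mxK.
Qed.

Lemma ext_mxM Q Q' : ext_mx Q *m ext_mx Q' = ext_mx (Q *m Q').
Proof.
rewrite {2}/ext_mx mulmxDr -[pid_mx m *m Q' *m _]mulmxA ext_mx_pid.
rewrite {1}/ext_mx mulmxDl -mulmxA mul_pid_mx_copid // mulmx0 add0r copid_mx_id //.
by rewrite /ext_mx !mulmxA.
Qed.

Lemma ext_mx_tr Q : (ext_mx Q)^T = ext_mx Q^T.
Proof.
by rewrite /ext_mx /copid_mx !linearD linearN /= trmx1 !trmx_mul !tr_pid_mx mulmxA.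
Qed.

Lemma ext_mx1 : ext_mx 1%:M = 1%:M.
Proof. by rewrite /ext_mx mulmx1 pid_mx_id // /copid_mx addrC subrK. Qed.

Lemma orthogonal_ext_mx Q : orthogonal_mx Q -> orthogonal_mx (ext_mx Q).
Proof. by rewrite /orthogonal_mx ext_mx_tr ext_mxM => ->; apply: ext_mx1. Qed.

End OrthogonalExtension.

Section Gradient.
Variables (R : realType) (d : nat) (Q : 'M[R]_d).

Lemma mulmx_differentiable (x : 'cV[R]_d) : differentiable (mulmx Q) x.
Proof.
have -> : mulmx Q = \sum_(j < d) (fun y : 'cV[R]_d => y j 0 *: col j Q).
  rewrite fct_sumE; apply/funext => y; apply/matrixP => i k.
  by rewrite !mxE summxE; apply: eq_bigr => j _; rewrite !mxE ord1 mulrC.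
by apply: differentiable_sum => j; apply: differentiableZl; apply: differentiable_coord.
Qed.

Lemma diff_mulmx (x : 'cV[R]_d) : 'd (mulmx Q) x = mulmx Q :> (_ -> _).
Proof.
pose L : {linear 'cV[R]_d -> 'cV[R]_d} := mulmx Q.
by apply: (diff_lin (f := L)) => y; apply/differentiable_continuous/mulmx_differentiable.
Qed.

Lemma is_gradient_mulmx (f : 'cV[R]_d -> R^o) (x g : 'cV[R]_d) :
  is_gradient f (Q *m x) g -> is_gradient (fun y => f (Q *m y)) x (Q^T *m g).
Proof.
move=> [df fg]; have dQ := mulmx_differentiable x.
have -> : (fun y => f (Q *m y)) = f \o mulmx Q by [].
split; first exact: differentiable_comp.
by move=> h; rewrite diff_comp //= diff_mulmx fg trmx_mul trmxK mulmxA.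
Qed.

End Gradient.

Lemma interpolates_orth (R : realType) d n p q (xc gc : 'I_q -> 'I_p)
    (F : 'M[R]_(n, q)) (P : 'M[R]_(d, n * p)) i j (f : 'cV[R]_d -> R^o) (Q : 'M[R]_d) :
  orthogonal_mx Q -> (forall a, locvar P j a = Q *m locvar P i a) ->
  (forall k, F j k = F i k) ->
  interpolates xc gc F P i f -> interpolates xc gc F P j (fun x => f (Q^T *m x)).
Proof.
move=> QQ Pji Fji fi k; rewrite !Pji Fji; split.
  by rewrite mulmxA QQ mul1mx; apply: (fi k).1.
rewrite -[Q in Q *m locvar P i (gc k)]trmxK; apply: is_gradient_mulmx.
by rewrite mulmxA QQ mul1mx; apply: (fi k).2.
Qed.

Theorem proposition5
  (R : realType) (n p q d : nat) (hn : (0 < n)%N) (hd : (n * p <= d)%N)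
  (* the SDP: constraints (linear / LMI, incl. interpolation) and objective *)
  (I : Type) (cA : I -> 'M[R]_(n, q)) (cB : I -> 'M[R]_(n * p)) (cb : I -> R)
  (oA : 'M[R]_(n, q)) (oB : 'M[R]_(n * p))
  (* positions of iterates and gradients among the p local variables *)
  (xc gc : 'I_q -> 'I_p)
  (* the function class (functions on R^d), invariant under orthogonal
     changes of variables *)
  (C : set ('cV[R]_d -> R^o))
  (hCinv : forall (f : 'cV[R]_d -> R^o) (Q : 'M[R]_d),
      C f -> orthogonal_mx Q -> C (fun x => f (Q *m x)))
  (* the interpolation constraints ensure that, for every feasible (F,G)
     and every factorization G = P^T P, each agent's triplets are
     interpolated by a function of the class *)
  (hinterp : forall (F : 'M[R]_(n, q)) (P : 'M[R]_(d, n * p)),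
      pep_feasible cA cB cb F (P^T *m P) ->
      forall i : 'I_n, exists f, C f /\ interpolates xc gc F P i f)
  (* all agents are equivalent *)
  (hequiv : forall i j : 'I_n, agents_equivalent cA cB cb oA oB i j)
  (* the PEP admits a worst-case (optimal) solution *)
  (hopt : exists F G, pep_optimal cA cB cb oA oB F G) :
  let a1 : 'I_n := Ordinal hn in
  exists (F : 'M[R]_(n, q)) (P : 'M[R]_(d, n * p))
         (f : 'I_n -> 'cV[R]_d -> R^o) (Rm : 'I_n -> 'M[R]_d),
    (* (F, P^T P) is a worst-case solution, realized by the instance (P, f) *)
    pep_optimal cA cB cb oA oB F (P^T *m P) /\
    (forall i, C (f i) /\ interpolates xc gc F P i (f i)) /\
    (* (i) the sequences are unitary transformations of each other *)
    (forall i, orthogonal_mx (Rm i)) /\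
    (forall (i : 'I_n) (a : 'I_p), locvar P i a = Rm i *m locvar P a1 a) /\
    (* (ii) equal function values at own iterates *)
    (forall (i j : 'I_n) (k : 'I_q),
        f i (locvar P i (xc k)) = f j (locvar P j (xc k))) /\
    (* and identical local functions up to a unitary change of variables *)
    (forall (i : 'I_n) (x : 'cV[R]_d), f i x = f a1 ((Rm i)^T *m x)).
Proof.
move=> a1.
have [F [G [optFG Finv Ginv]]] := exists_symmetric_optimum hequiv hopt.
have [P0 [P0G P0inv]] := psd_invariant_factor optFG.1.1 Ginv.
pose P : 'M[R]_(d, n * p) := pid_mx (n * p) *m P0.
have PG : P^T *m P = G by rewrite trmx_mul tr_pid_mx -mulmxA (mul_pid_mxK hd) P0G.
pose Rm (i : 'I_n) : 'M[R]_d := ext_mx d (perm_mx (blk_permP (p := p) (tperm a1 i))).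
have Rorth i : orthogonal_mx (Rm i) by apply/(orthogonal_ext_mx hd)/orthogonal_perm_mx.
have PR i a : locvar P i a = Rm i *m locvar P a1 a.
  rewrite /locvar !colE -!mulmxA -!colE (col_pidx_tperm (i := a1) _ (P0inv _)).
  by rewrite (ext_mx_pid hd).
have Fa1 i k : F i k = F a1 k.
  have := congr1 (fun M : 'M[R]_(n, q) => M a1 k) (Finv (tperm a1 i)).
  by rewrite mxE tpermL.
have [f1 [Cf1 If1]] : exists f, C f /\ interpolates xc gc F P a1 f.
  by apply: hinterp; rewrite PG; case: optFG.
have fi_interp i : interpolates xc gc F P i (fun x => f1 ((Rm i)^T *m x)).
  exact: interpolates_orth (Rorth i) (PR i) (Fa1 i) If1.
exists F, P, (fun i x => f1 ((Rm i)^T *m x)), Rm; split; first by rewrite PG.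
split; first by move=> i; split; [apply: hCinv Cf1 (orthogonal_mx_tr _) | apply: fi_interp].
split; first exact: Rorth.
split; first exact: PR.
split; first by move=> i j k; rewrite (fi_interp i k).1 (fi_interp j k).1 !Fa1.
by move=> i x; rewrite /Rm tperm1 blk_permP1 perm_mx1 ext_mx1 // trmx1 mul1mx.
Qed.
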